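(* Let $q$ be a prime power, $M\geq 2$ an integer, $n\geq1$, and let $A\in\mathrm{Sp}(2n,q)$ have characteristic polynomial $f$ which is a SRIM polynomial of degree $2n$. Then the equation $\alpha^M=A$ has a solution $\alpha\in\mathrm{Sp}(2n,q)$ if and only if $f$ is an $M^*$-power SRIM polynomial.
   Context: For a monic polynomial $f$ of degree $r$ with $f(0)\neq0$, $f^*(x)=f(0)^{-1}x^rf(x^{-1})$; $f$ is self-reciprocal if $f=f^*$. SRIM means self-reciprocal irreducible monic. A SRIM polynomial $f$ of degree $2k$ ($k\ge1$) is an $M^*$-power SRIM polynomial if $f(x^M)$ has a SRIM factor of degree $2k$. $\mathrm{Sp}(2n,q)$ is the symplectic group of a non-degenerate alternating form on $\mathbb{F}_q^{2n}$. *)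

From HB Require Import structures.
From mathcomp Require Import all_boot all_order all_algebra all_field.
Set Implicit Arguments. Unset Strict Implicit. Unset Printing Implicit Defensive.
Import GRing.Theory.
Local Open Scope ring_scope.

(* Reciprocal polynomial: f^*(x) = f(0)^{-1} x^r f(1/x), r = deg f.
   In coefficient form: the reversed coefficient sequence scaled by f(0)^{-1}. *)
Definition recip (F : fieldType) (f : {poly F}) : {poly F} :=
  (f`_0)^-1 *: Poly (rev f).

Definition self_reciprocal (F : fieldType) (f : {poly F}) : Prop :=
  f`_0 != 0 /\ recip f = f.

Definition srim (F : fieldType) (f : {poly F}) : Prop :=
  f \is monic /\ irreducible_poly f /\ self_reciprocal f.

Definition Mstar_power_srim (F : fieldType) (M : nat) (f : {poly F}) : Prop :=
  srim f /\ (exists k, (1 <= k)%N /\ (size f).-1 = k.*2) /\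
  exists g : {poly F}, srim g /\ g %| f \Po 'X^M /\ size g = size f.

Definition nondeg_alternating (F : fieldType) (m : nat) (B : 'M[F]_m) : Prop :=
  (forall i, B i i = 0) /\ B^T = - B /\ B \in unitmx.

(* The symplectic group of B: matrices A (acting on row vectors v |-> v A)
   preserving the form. *)
Definition symplectic (F : fieldType) (m : nat) (B A : 'M[F]_m) : Prop :=
  A *m B *m A^T = B.

(* If alpha ^+ M = A, then F[A] <= F[alpha] and both have dimension 2n, so alpha is
   a polynomial in A and F[alpha] = F[A] is a field: the minimal polynomial g of
   alpha is irreducible of degree 2n and divides f(x^M).  As alpha is symplectic,
   alpha^-1 = B alpha^T B^-1, so g(alpha^-1) = 0 and g is self-reciprocal.
   Conversely, let b be a root of g in F[x]/(g).  Then lambda = b^M is a root of f,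
   and counting gives F(lambda) = F(b), i.e. b = h(lambda) for a polynomial h.
   Put alpha = h(A), so alpha ^+ M = A.  Since g is self-reciprocal, b^-1 is a root
   of g too, whence h(lambda^-1) = b^-1 and h(A) h(A^-1) = 1, which for symplectic A
   says exactly that h(A) is symplectic.  Throughout, a polynomial identity in A (or
   alpha) is checked at a root in a field: that root has the same annihilator. *)

From HB Require Import structures.
From mathcomp Require Import all_boot all_order all_algebra all_field.
Set Implicit Arguments. Unset Strict Implicit. Unset Printing Implicit Defensive.
Import GRing.Theory.
Local Open Scope ring_scope.

Section PolyRoots.

Variable F : fieldType.
Implicit Types p g : {poly F}.

Lemma Poly_rev p : p`_0 != 0 -> Poly (rev p) = rev p :> seq F.
Proof.
move=> p0; apply: (@PolyK _ 0).
by case: (polyseq p) p0 => [|c s] /=; [rewrite eqxx | rewrite rev_cons last_rcons].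
Qed.

Lemma size_recip p : p`_0 != 0 -> size (recip p) = size p.
Proof. by move=> p0; rewrite size_scale ?invr_eq0 // Poly_rev // size_rev. Qed.

Lemma recip_monic p : p`_0 != 0 -> recip p \is monic.
Proof.
move=> p0; rewrite monicE lead_coefZ lead_coefE Poly_rev // size_rev.
case: (polyseq p) p0 => [|c s] /=; first by rewrite eqxx.
by move=> c0; rewrite rev_cons nth_rcons size_rev ltnn eqxx mulVf.
Qed.

Lemma irredp_coef0_neq0 p : irreducible_poly p -> (2 < size p)%N -> p`_0 != 0.
Proof.
case=> _ pI sp; apply/negP => /eqP p0.
have /pI : 'X - 0%:P %| p by rewrite dvdp_XsubCl /root horner_coef0 p0.
rewrite size_XsubC => /(_ isT) /eqp_size.
by rewrite size_XsubC => sp2; rewrite -sp2 in sp.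
Qed.

Lemma dvdp_mulX_sub1 p : p`_0 != 0 -> exists r, p %| 'X * r - 1.
Proof.
move=> p0; exists (- (p`_0)^-1 *: (p %/ 'X)).
apply/dvdpP; exists (- (p`_0)^-1)%:P.
(* Since p = (p %/ 'X) * 'X + p`_0, we get 'X * r - 1 = - (p`_0)^-1 * p. *)
have := modp_XsubC p 0; rewrite subr0 horner_coef0 => pX0.
rewrite -scalerAr mulrC -[p %/ _ * _]addr0 -(subrr (p %% 'X)) addrA -divp_eq pX0.
by rewrite mul_polyC scalerBr scale_polyC mulNr mulVf // polyCN polyC1 opprK addrK.
Qed.

Variables (K : fieldType) (phi : {rmorphism F -> K}).

Lemma horner_map_Poly_rev p (x : K) : x != 0 ->
  x ^+ (size p).-1 * (map_poly phi (Poly (rev p))).[x^-1] = (map_poly phi p).[x].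
Proof.
move=> x0; rewrite (@horner_coef_wide _ (size p)); last first.
  by rewrite size_map_poly -(size_rev p) size_Poly.
rewrite horner_coef mulr_sumr size_map_poly.
rewrite [RHS](reindex_inj rev_ord_inj) /=.
apply: eq_bigr => i _; rewrite !coef_map coef_Poly nth_rev // mulrCA.
congr (_ * _); rewrite -{1}(subnKC (valP i)) addSn addnC exprD exprVn.
by rewrite mulfK // expf_neq0.
Qed.

Lemma root_map_neq0 p (x : K) : p`_0 != 0 -> root (map_poly phi p) x -> x != 0.
Proof.
by move=> p0; apply: contraTneq => ->; rewrite /root horner_coef0 coef_map fmorph_eq0.
Qed.

Lemma root_map_recip p (x : K) : p`_0 != 0 -> x != 0 ->
  root (map_poly phi (recip p)) x = root (map_poly phi p) x^-1.
Proof.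
move=> p0 x0; rewrite /root map_polyZ hornerZ -(horner_map_Poly_rev p) ?invr_eq0 //.
rewrite invrK !mulf_eq0 fmorph_eq0 !invr_eq0 (negbTE p0) /=.
by rewrite expf_eq0 invr_eq0 (negbTE x0) andbF.
Qed.

Lemma irredp_root_dvdp f p (x : K) : irreducible_poly f ->
  root (map_poly phi f) x -> root (map_poly phi p) x = (f %| p).
Proof.
move=> fI fx; apply/idP/idP => [px | /dvdpP [q ->]]; last first.
  by rewrite rmorphM rootM fx orbT.
apply/negPn; rewrite -irreducible_poly_coprime // -(coprimep_map phi).
by apply/negP => /coprimep_root /(_ fx); rewrite -[_ != 0]/(~~ root _ _) px.
Qed.

Lemma root_map_comp_Xn p M (x : K) :
  root (map_poly phi (p \Po 'X^M)) x = root (map_poly phi p) (x ^+ M).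
Proof. by rewrite /root map_comp_poly horner_comp map_polyXn hornerXn. Qed.

Lemma root_map_comp_Xn_subX p M (x : K) :
  root (map_poly phi (p \Po 'X^M - 'X)) x = ((map_poly phi p).[x ^+ M] == x).
Proof.
rewrite /root rmorphB /= map_comp_poly hornerD hornerN horner_comp map_polyXn hornerXn.
by rewrite map_polyX hornerX subr_eq0.
Qed.

Lemma self_reciprocal_root_inv g p (x : K) :
  irreducible_poly g -> self_reciprocal g ->
  root (map_poly phi g) x -> root (map_poly phi p) x -> root (map_poly phi p) x^-1.
Proof.
move=> gI [g0 gR] gx px.
have gxV : root (map_poly phi g) x^-1.
  by rewrite -root_map_recip ?gR // (root_map_neq0 g0 gx).
by rewrite (irredp_root_dvdp p gI gxV) -(irredp_root_dvdp p gI gx).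
Qed.

Lemma recip_root_inv g (x : K) : g \is monic -> irreducible_poly g -> g`_0 != 0 ->
  root (map_poly phi g) x -> root (map_poly phi g) x^-1 -> recip g = g.
Proof.
move=> gM gI g0 gx gxV.
have /dvdp_size_eqp : g %| recip g.
  by rewrite -(irredp_root_dvdp _ gI gx) root_map_recip // (root_map_neq0 g0 gx).
by rewrite size_recip // eqxx eqp_monic ?recip_monic // => /esym /eqP.
Qed.

End PolyRoots.

Lemma root_qfpoly_qX (F : fieldType) (g : {poly F}) (gI : monic_irreducible_poly g) p :
  root (map_poly (qfpoly_const gI) p) ('qX : {poly %/ g with gI}) = (g %| p).
Proof.
have gM : g \is monic by case: gI.
rewrite /root -in_qpoly_comp_horner comp_polyXr.
apply/eqP/idP => [/val_eqP /= | gp]; last apply/val_eqP; rewrite /=.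
  by rewrite -Pdiv.IdomainMonic.modpE ?mk_monicE.
by rewrite -Pdiv.IdomainMonic.modpE mk_monicE.
Qed.

Lemma irredp_root_generates (F K : finFieldType) (phi : {rmorphism F -> K})
    (f : {poly F}) (x : K) :
  irreducible_poly f -> root (map_poly phi f) x -> (#|K| <= #|F| ^ (size f).-1)%N ->
  forall y : K, exists h, (map_poly phi h).[x] = y.
Proof.
move=> fI fx cardK y; pose ev (u : {poly_(size f).-1 F}) := (map_poly phi u).[x].
have ev_inj : injective ev.
  move=> u w euw; apply/eqP; rewrite -subr_eq0; apply/eqP/val_inj => /=.
  have fuw : f %| val (u - w).
    rewrite -(irredp_root_dvdp _ fI fx) /root rmorphB hornerD hornerN.
    by rewrite -/(ev u) -/(ev w) euw subrr.
  have [// | uw0] := eqVneq (val (u - w)) 0.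
  have := leq_trans (dvdp_leq uw0 fuw) (size_npoly (u - w)).
  by rewrite leqNgt ltn_predL; case: fI => /ltnW ->.
have card_ev : (#|K| <= #|{poly_(size f).-1 F}|)%N by rewrite card_npoly.
by have /codomP [u ->] := inj_card_onto ev_inj card_ev y; exists (val u).
Qed.

Section HornerMxComRing.

Variables (R : comNzRingType) (n : nat).
Implicit Types (X : 'M[R]_n.+1) (p q : {poly R}).

Lemma horner_mx_comp X p q : horner_mx X (p \Po q) = horner_mx (horner_mx X q) p.
Proof.
elim/poly_ind: p => [|p c IHp]; first by rewrite comp_poly0 !rmorph0.
rewrite comp_polyD comp_polyM comp_polyX comp_polyC !rmorphD !rmorphM /= IHp.
by rewrite !horner_mx_C horner_mx_X.
Qed.

Lemma horner_mx_trmx X p : horner_mx X^T p = (horner_mx X p)^T.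
Proof.
elim/poly_ind: p => [|p c IHp]; first by rewrite !rmorph0 trmx0.
rewrite !rmorphD !rmorphM /= IHp !horner_mx_C !horner_mx_X linearD /= tr_scalar_mx.
by rewrite -!mulmxE -trmx_mul (comm_horner_mx p (erefl (X *m X))).
Qed.

End HornerMxComRing.

Section HornerMx.

Variables (F : fieldType) (n : nat).
Implicit Types (X : 'M[F]_n.+1) (p : {poly F}).

Lemma horner_mx_invmx X : X \in unitmx -> exists r, horner_mx X r = invmx X.
Proof.
move=> Xu; have [|r chr] := @dvdp_mulX_sub1 _ (char_poly X).
  by rewrite char_poly_det mulf_neq0 ?signr_eq0 // -unitfE -unitmxE.
exists r; move/dvdpP: chr => [c /(congr1 (horner_mx X))].
rewrite rmorphM /= Cayley_Hamilton mulr0 rmorphB rmorphM /= rmorph1 horner_mx_X.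
move/eqP; rewrite subr_eq0 => /eqP XrX.
by rewrite -[LHS]mul1mx -(mulVmx Xu) -mulmxA mulmxE XrX mulr1.
Qed.

Lemma mxminpoly_char_irr X :
  irreducible_poly (char_poly X) -> mxminpoly X = char_poly X.
Proof.
case=> _ /(_ _ _ (mxminpoly_dvd_char X)).
rewrite size_mxminpoly eqSS -lt0n mxminpoly_nonconstant => /(_ isT).
by rewrite eqp_monic ?mxminpoly_monic ?char_poly_monic // => /eqP.
Qed.

Definition same_annihilator (K : fieldType) (phi : {rmorphism F -> K}) X (x : K) :=
  forall p, (horner_mx X p == 0) = root (map_poly phi p) x.

Lemma irr_mxminpoly_same_annihilator (K : fieldType) (phi : {rmorphism F -> K})
    X (x : K) :
  irreducible_poly (mxminpoly X) -> root (map_poly phi (mxminpoly X)) x ->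
  same_annihilator phi X x.
Proof. by move=> gI gx p; rewrite -dvd_mxminpoly (irredp_root_dvdp _ gI gx). Qed.

Lemma same_annihilator_invmx (K : fieldType) (phi : {rmorphism F -> K}) X (x : K) r :
  same_annihilator phi X x -> X \in unitmx -> horner_mx X r = invmx X ->
  (map_poly phi r).[x] = x^-1.
Proof.
move=> annX Xu Xr; have := annX ('X * r - 1).
rewrite rmorphB rmorphM /= horner_mx_X rmorph1 Xr -mulmxE mulmxV // subrr eqxx.
rewrite /root rmorphB rmorphM /= map_polyX rmorph1 !hornerE subr_eq0 => /esym /eqP xr.
have x0 : x != 0 by apply: contra_eq_neq xr => ->; rewrite mul0r eq_sym oner_eq0.
by rewrite -[RHS]mulr1 -xr mulKf.
Qed.

Lemma degree_mxminpoly_leq X : (degree_mxminpoly X <= n.+1)%N.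
Proof.
have := dvdp_leq (monic_neq0 (char_poly_monic X)) (mxminpoly_dvd_char X).
by rewrite size_mxminpoly size_char_poly.
Qed.

Lemma full_degree_horner_mx X p : degree_mxminpoly (horner_mx X p) = n.+1 ->
  degree_mxminpoly X = n.+1 /\ exists k, horner_mx (horner_mx X p) k = X.
Proof.
set A := horner_mx X p => dA.
have rankA : \rank (powers_mx A n.+1) = n.+1.
  by have := eqnP (minpoly_mx_free A); rewrite dA.
have rankX := eqnP (minpoly_mx_free X).
have AX : (powers_mx A n.+1 <= powers_mx X (degree_mxminpoly X))%MS.
  by apply/row_subP => i; rewrite rowK /A -rmorphXn horner_mx_mem.
have dX : degree_mxminpoly X = n.+1.
  by apply/eqP; rewrite eqn_leq degree_mxminpoly_leq -{1}rankA -rankX mxrankS.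
split=> //; exists (mx_inv_horner A X); apply: mx_inv_hornerK; rewrite dA.
have XA : (powers_mx X (degree_mxminpoly X) <= powers_mx A n.+1)%MS.
  by rewrite -(geq_leqif (mxrank_leqif_sup AX)) rankA rankX dX.
by apply: submx_trans XA; rewrite -[X in (X \in _)%MS]horner_mx_X horner_mx_mem.
Qed.

Lemma same_annihilator_irr_mxminpoly (K : fieldType) (phi : {rmorphism F -> K})
    X (x : K) :
  same_annihilator phi X x -> irreducible_poly (mxminpoly X).
Proof.
move=> annX; set g := mxminpoly X.
have gx : root (map_poly phi g) x by rewrite -annX mx_root_minpoly.
split=> [|q sq qg]; first by rewrite size_mxminpoly ltnS mxminpoly_nonconstant.
have : root (map_poly phi (g %/ q * q)) x by rewrite divpK.
rewrite rmorphM rootM -!annX -!dvd_mxminpoly -/g.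
case/orP=> [g_gq | gq]; last by rewrite /eqp qg gq.
have g0 : g != 0 by apply: monic_neq0; apply: mxminpoly_monic.
have q0 : q != 0 by apply: contraNneq g0 => q0; move: qg; rewrite q0 dvd0p.
have gq0 : g %/ q != 0 by apply: contraNneq g0 => gq0; rewrite -(divpK qg) gq0 mul0r.
have sq2 : (1 < size q)%N by rewrite ltn_neqAle eq_sym sq size_poly_gt0 q0.
have := dvdp_leq gq0 g_gq.
by rewrite size_divp // leqNgt ltn_subrL ltn_predRL sq2 size_poly_gt0 g0.
Qed.

End HornerMx.

Section Symplectic.

Variables (F : fieldType) (n : nat) (B : 'M[F]_n.+1).
Hypothesis B_unit : B \in unitmx.
Implicit Types (A : 'M[F]_n.+1) (p : {poly F}).

Lemma symplectic_invmx A :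
  symplectic B A -> A \in unitmx /\ invmx A = B *m A^T *m invmx B.
Proof.
move=> sA; have AC : A *m (B *m A^T *m invmx B) = 1%:M by rewrite !mulmxA sA mulmxV.
have [Au _] := mulmx1_unit AC; split=> //.
by rewrite -[RHS](mulKmx Au) AC mulmx1.
Qed.

Lemma symplectic_trmx A : symplectic B A -> A^T = invmx B *m invmx A *m B.
Proof.
by case/symplectic_invmx=> _ ->; rewrite !mulmxA mulVmx // mul1mx mulmxKV.
Qed.

Lemma horner_mx_symplectic_trmx A p : symplectic B A ->
  (horner_mx A p)^T = invmx B *m horner_mx (invmx A) p *m B.
Proof. by move=> sA; rewrite -horner_mx_trmx symplectic_trmx // horner_mx_uconjC. Qed.

Lemma symplectic_horner_mx A p : symplectic B A ->
  horner_mx A p *m horner_mx (invmx A) p = 1%:M -> symplectic B (horner_mx A p).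
Proof.
move=> sA hAhAV; rewrite /symplectic horner_mx_symplectic_trmx // !mulmxA.
by rewrite mulmxK // hAhAV mul1mx.
Qed.

Lemma symplectic_mxminpoly_invmx A : symplectic B A ->
  horner_mx (invmx A) (mxminpoly A) = 0.
Proof.
move=> sA; have := horner_mx_symplectic_trmx (mxminpoly A) sA.
rewrite mx_root_minpoly trmx0 => /(congr1 (fun C => B *m C *m invmx B)).
by rewrite mulmx0 mul0mx !mulmxA mulmxV // mul1mx mulmxK.
Qed.

End Symplectic.

Lemma mxminpoly_symplectic_root (F : fieldType) (n M : nat) (B A alpha : 'M[F]_n.+2) :
  B \in unitmx -> irreducible_poly (char_poly A) ->
  symplectic B alpha -> alpha ^+ M = A ->
  [/\ srim (mxminpoly alpha), mxminpoly alpha %| char_poly A \Po 'X^M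
    & size (mxminpoly alpha) = size (char_poly A)].
Proof.
move=> Bu fI sal alM; set g := mxminpoly alpha.
have fmI : monic_irreducible_poly (char_poly A) by split; last exact: char_poly_monic.
pose phi : {rmorphism F -> {poly %/ char_poly A with fmI}} := qfpoly_const fmI.
pose lam : {poly %/ char_poly A with fmI} := 'qX.
have annA : same_annihilator phi A lam.
  by apply: irr_mxminpoly_same_annihilator; rewrite mxminpoly_char_irr // root_qfpoly_qX.
have alXM : horner_mx alpha 'X^M = A by rewrite rmorphXn /= horner_mx_X.
have dA : degree_mxminpoly (horner_mx alpha 'X^M) = n.+2.
  by have := size_mxminpoly A; rewrite alXM mxminpoly_char_irr // size_char_poly => -[].
have [dal [k alk]] := full_degree_horner_mx dA.
set mu := (map_poly phi k).[lam].
have annal : same_annihilator phi alpha mu.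
  move=> p; rewrite -alk -horner_mx_comp alXM annA.
  by rewrite /root map_comp_poly horner_comp.
have gI : irreducible_poly g := same_annihilator_irr_mxminpoly annal.
have g0 : g`_0 != 0 by apply: irredp_coef0_neq0; rewrite // size_mxminpoly dal.
have [alu _] := symplectic_invmx Bu sal; have [v alv] := horner_mx_invmx alu.
have gmuV : root (map_poly phi g) mu^-1.
  have := annal (g \Po v).
  rewrite horner_mx_comp alv (symplectic_mxminpoly_invmx Bu sal) eqxx /root.
  by rewrite map_comp_poly horner_comp (same_annihilator_invmx annal alu alv) => <-.
have gmu : root (map_poly phi g) mu by rewrite -annal mx_root_minpoly.
have gR : recip g = g := recip_root_inv (mxminpoly_monic _) gI g0 gmu gmuV.
split; last by rewrite size_mxminpoly dal size_char_poly.
  by split; [exact: mxminpoly_monic | split=> //; split].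
by rewrite dvd_mxminpoly horner_mx_comp alXM Cayley_Hamilton.
Qed.

Lemma exists_symplectic_root (F : finFieldType) (n M : nat) (B A : 'M[F]_n.+1)
    (g : {poly F}) :
  B \in unitmx -> symplectic B A -> irreducible_poly (char_poly A) ->
  srim g -> g %| char_poly A \Po 'X^M -> size g = size (char_poly A) ->
  exists alpha, symplectic B alpha /\ alpha ^+ M = A.
Proof.
move=> Bu sA fI [gM [gI gSR]] g_fXM sg.
have gmI : monic_irreducible_poly g by [].
pose phi : {rmorphism F -> {poly %/ g with gmI}} := qfpoly_const gmI.
pose b : {poly %/ g with gmI} := 'qX; pose lam := b ^+ M.
have g_b p : root (map_poly phi p) b = (g %| p) by exact: root_qfpoly_qX.
have annA : same_annihilator phi A lam.
  apply: irr_mxminpoly_same_annihilator; rewrite mxminpoly_char_irr //.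
  by have := g_b (char_poly A \Po 'X^M); rewrite g_fXM root_map_comp_Xn.
have f_lam : root (map_poly phi (char_poly A)) lam by rewrite -annA Cayley_Hamilton.
have card_K : (#|{poly %/ g with gmI}| <= #|F| ^ (size (char_poly A)).-1)%N.
  by rewrite card_qfpoly sg.
have [h hb] := irredp_root_generates fI f_lam card_K b.
have gb : root (map_poly phi g) b by rewrite g_b.
have hbV : (map_poly phi h).[lam^-1] = b^-1.
  have g_hXM : root (map_poly phi (h \Po 'X^M - 'X)) b.
    by rewrite root_map_comp_Xn_subX hb.
  have := self_reciprocal_root_inv gI gSR gb g_hXM.
  by rewrite root_map_comp_Xn_subX exprVn => /eqP.
have b0 : b != 0 := root_map_neq0 gSR.1 gb.
exists (horner_mx A h); split.
  have [Au _] := symplectic_invmx Bu sA; have [r Ar] := horner_mx_invmx Au.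
  apply: symplectic_horner_mx => //; rewrite -Ar -horner_mx_comp mulmxE -rmorphM /=.
  apply/eqP; rewrite -subr_eq0 -(horner_mx_C A 1) -rmorphB annA /root.
  rewrite rmorphB rmorphM /= map_comp_poly map_polyC rmorph1.
  rewrite hornerD hornerN hornerM horner_comp hornerC.
  by rewrite (same_annihilator_invmx annA Au Ar) hbV hb mulfV ?subrr.
rewrite -rmorphXn /=; apply/eqP; rewrite -subr_eq0 -{2}(horner_mx_X A) -rmorphB annA.
rewrite /root rmorphB rmorphXn /= map_polyX.
by rewrite hornerD hornerN horner_exp hornerX hb subrr.
Qed.

Unset Implicit Arguments.
Set Strict Implicit.

Theorem corollary5p3 (F : finFieldType) (M n : nat)
  (B A : 'M[F]_(n.*2)) :
  (2 <= M)%N -> (1 <= n)%N ->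
  nondeg_alternating B ->
  symplectic B A ->
  srim (char_poly A) ->
  (exists alpha : 'M[F]_(n.*2), symplectic B alpha /\ alpha ^+ M = A)
  <-> Mstar_power_srim M (char_poly A).
Proof.
case: n B A => [//|n] B A _ _ [_ [_ B_unit]] sA f_srim; have [_ [fI _]] := f_srim.
split=> [[alpha [s_alpha alphaM]] | [_ [_ [g [g_srim [g_fXM sg]]]]]].
  have [g_srim g_fXM sg] := mxminpoly_symplectic_root B_unit fI s_alpha alphaM.
  split=> //; split; first by exists n.+1; rewrite size_char_poly.
  by exists (mxminpoly alpha).
exact: exists_symplectic_root B_unit sA fI g_srim g_fXM sg.
Qed.
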